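(* For all rooted transition systems $\mathscr{M}$ and $\mathscr{N}$, there exists a functional bisimulation between $\mathscr{M}$ and $\mathscr{N}$ if and only if there exists a bi-interpretation of rooted transition systems between $\mathscr{M}$ and $\mathscr{N}$.
   Context: A rooted transition system $\mathscr{M}$ consists of a set $S_\mathscr{M}$ of states, a binary transition relation $\to$, and an initial state. A simulation $f:\mathscr{M}\to\mathscr{N}$ is a function $S_\mathscr{M}\to S_\mathscr{N}$ with $s\to s'$ implying $f(s)\to f(s')$ and mapping initial state to initial state. $\to^*$ is the reflexive-transitive closure of $\to$. Two states $s,t$ are path-equivalent, $s\sim t$, if for all states $u$: $s\to^*u\iff t\to^*u$ and $u\to^*s\iff u\to^*t$. A functional bisimulation between $\mathscr{M}$ and $\mathscr{N}$ is a pair of simulations $f:\mathscr{M}\to\mathscr{N}$, $g:\mathscr{N}\to\mathscr{M}$ with $gf(s)\sim_\mathscr{M} s$ for all $s\in S_\mathscr{M}$ and $fg(t)\sim_\mathscr{N}t$ for all $t\in S_\mathscr{N}$. A bi-interpretation of rooted transition systems between $\mathscr{M}$ and $\mathscr{N}$ is a pair of simulations $f:\mathscr{M}\to\mathscr{N}$, $g:\mathscr{N}\to\mathscr{M}$ such that for all $s\in S_\mathscr{M}$, $gf(s)\to^*s$ and $s\to^*gf(s)$, and for all $t\in S_\mathscr{N}$, $fg(t)\to^*t$ and $t\to^*fg(t)$. *)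

From Stdlib Require Import Relations.

Record RTS : Type := mkRTS {
  state : Type;
  trans : state -> state -> Prop;
  init  : state
}.

Definition reach (M : RTS) : state M -> state M -> Prop :=
  clos_refl_trans (state M) (trans M).

Definition simulation (M N : RTS) (f : state M -> state N) : Prop :=
  (forall s s' : state M, trans M s s' -> trans N (f s) (f s')) /\
  f (init M) = init N.

Definition path_equiv (M : RTS) (s t : state M) : Prop :=
  forall u : state M,
    (reach M s u <-> reach M t u) /\ (reach M u s <-> reach M u t).

Definition functional_bisimulation (M N : RTS)
    (f : state M -> state N) (g : state N -> state M) : Prop :=
  simulation M N f /\ simulation N M g /\
  (forall s : state M, path_equiv M (g (f s)) s) /\
  (forall t : state N, path_equiv N (f (g t)) t).

Definition bi_interpretation (M N : RTS)
    (f : state M -> state N) (g : state N -> state M) : Prop :=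
  simulation M N f /\ simulation N M g /\
  (forall s : state M, reach M (g (f s)) s /\ reach M s (g (f s))) /\
  (forall t : state N, reach N (f (g t)) t /\ reach N t (f (g t))).

From Stdlib Require Import Relations.

Lemma path_equiv_iff_reach (M : RTS) (s t : state M) :
  path_equiv M s t <-> reach M s t /\ reach M t s.
Proof.
  split.
  - intros Hst. split.
    + apply (proj1 (Hst t)), rt_refl.
    + apply (proj1 (Hst s)), rt_refl.
  - intros [Hst Hts] u. split; split; intros Hreach.
    + exact (rt_trans _ _ _ _ _ Hts Hreach).
    + exact (rt_trans _ _ _ _ _ Hst Hreach).
    + exact (rt_trans _ _ _ _ _ Hreach Hst).
    + exact (rt_trans _ _ _ _ _ Hreach Hts).
Qed.

Lemma functional_bisimulation_iff_bi_interpretation (M N : RTS)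
    (f : state M -> state N) (g : state N -> state M) :
  functional_bisimulation M N f g <-> bi_interpretation M N f g.
Proof.
  unfold functional_bisimulation, bi_interpretation.
  split; intros (Hf & Hg & Hgf & Hfg);
    refine (conj Hf (conj Hg (conj _ _))); intros;
    apply path_equiv_iff_reach; auto.
Qed.

Theorem mainTheorem4 (M N : RTS) :
  (exists (f : state M -> state N) (g : state N -> state M),
      functional_bisimulation M N f g) <->
  (exists (f : state M -> state N) (g : state N -> state M),
      bi_interpretation M N f g).
Proof.
  split; intros (f & g & Hfg); exists f, g;
    apply functional_bisimulation_iff_bi_interpretation, Hfg.
Qed.
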